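(* For each $n$, let $K=K(n)$ be a kernel, $k=k(n)\in\mathbb N$, $e=e(n)\in E(K)$, and let $C=C(K,k)$ be a uniformly random core with kernel $K$ and $|V(K)|+k$ vertices. If $|E(K)|=o(k)$, then the subdivision number $s_C(e)$ tends to infinity in probability, i.e. for each fixed $j\in\mathbb N_0$, $\Pr[s_C(e)\le j]\to0$.
   Context: A kernel is a multigraph (loops and multiple edges allowed) of minimum degree at least three; a core is a graph of minimum degree at least two. The kernel of a core is obtained by replacing every maximal path whose internal vertices all have degree two by an edge between its endpoints; conversely a core with kernel $K$ arises from $K$ by subdividing its edges. $C(K,k)$ is chosen uniformly from all cores (on a labelled vertex set containing $V(K)$, with $k$ additional vertices) whose kernel is $K$. For an edge $e\in E(K)$, the subdivision number $s_C(e)$ is the number of vertices by which $e$ is subdivided to obtain $C$. *)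

From HB Require Import structures.
From mathcomp Require Import all_boot all_order all_algebra.
From mathcomp Require Import all_classical all_reals all_analysis.
Unset Strict Implicit. Unset Printing Implicit Defensive.
Import Order.TTheory GRing.Theory Num.Theory.

(* A (labelled) multigraph: vertices 'I_kv, edges 'I_ke, each edge with an
   ordered pair of endpoints (the order only fixes an orientation used to
   record the order of subdivision vertices along the edge). Loops and
   multiple edges are allowed. *)
Record multigraph := MultiGraph {
  kv : nat;
  ke : nat;
  kends : {ffun 'I_ke -> 'I_kv * 'I_kv} }.

Definition kdeg (K : multigraph) (v : 'I_(kv K)) : nat :=
  \sum_(i < ke K) (((kends K i).1 == v) + ((kends K i).2 == v))%N.

Definition is_kernel (K : multigraph) : Prop :=
  forall v : 'I_(kv K), (3 <= kdeg K v)%N.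

Definition is_loop (K : multigraph) (i : 'I_(ke K)) : bool :=
  (kends K i).1 == (kends K i).2.

Definition parallel (K : multigraph) (i i' : 'I_(ke K)) : bool :=
  (kends K i == kends K i') ||
  (kends K i == ((kends K i').2, (kends K i').1)).

(* Subdivision data: the j-th extra vertex (j : 'I_k) is put on edge
   (f j).1 at position (f j).2 (counted from the first endpoint). *)
Definition subdiv (K : multigraph) (k : nat) := {ffun 'I_k -> 'I_(ke K) * 'I_k}.

Definition snum (K : multigraph) (k : nat) (f : subdiv K k) (i : 'I_(ke K)) : nat :=
  #|[set v | (f v).1 == i]|.

(* f encodes a genuine subdivision (positions on each edge are exactly
   0, ..., s(i)-1) and the resulting graph is simple, i.e. a core with
   kernel K on vertex set V(K) + k extra vertices. *)
Definition valid_subdiv (K : multigraph) (k : nat) (f : subdiv K k) : bool :=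
  [&& injectiveb f,
      [forall v, ((f v).2 < snum K k f (f v).1)%N],
      [forall i, is_loop K i ==> (2 <= snum K k f i)%N] &
      [forall i, forall i', ((i != i') && parallel K i i') ==>
                            ((0 < snum K k f i) || (0 < snum K k f i'))%N]].

Definition core_prob (R : realType) (K : multigraph) (k : nat)
    (e : 'I_(ke K)) (j : nat) : R :=
  (#|[set f : subdiv K k | valid_subdiv K k f && (snum K k f e <= j)%N]|%:R /
   #|[set f : subdiv K k | valid_subdiv K k f]|%:R)%R.

From HB Require Import structures.
From mathcomp Require Import all_boot all_order all_algebra.
From mathcomp Require Import all_classical all_reals all_analysis.
From mathcomp Require Import zify.
Import Order.TTheory GRing.Theory Num.Theory.

(* Let m = |E(K)|.  A core with kernel K and k extra labelled vertices is
   determined by its profile, the composition s = (s_i)_{i in E(K)} of k into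
   subdivision numbers, together with a bijection of the k extra vertices onto
   the k slots (i, p), p < s_i.  The admissibility conditions (a loop carries
   at least two vertices, of two parallel edges at least one is subdivided)
   only depend on s, so every admissible composition has exactly k! cores:
   counting cores reduces to counting compositions (core_count).

   Write N_t for the number of admissible compositions with s_e = t.
   Moving one unit from an edge i != e with s_i >= 3 to e is a switching that
   preserves admissibility; double counting it gives
   (k - t - 2m) N_t <= k N_{t+1} (level_switching).  Iterating, N_t is at most
   twice N_{t'} for t <= t' <= T as long as 2 T (T + 2m) <= k (level_chain),
   hence Pr[s_e <= j] <= 2 (j+1) / L with T = j + L (core_bound).  Since
   m = o(k), L can be taken arbitrarily large, which proves the theorem. *)

Lemma card_predE (T : finType) (P : pred T) :
  #|[set x | P x]| = (\sum_x (P x : nat))%N.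
Proof.
by rewrite -sum1dep_card big_mkcond /=; apply: eq_bigr => x _; case: (P x).
Qed.

Lemma sum_ord_lt k n : (\sum_(p < k) ((p : nat) < n) : nat)%N = minn k n.
Proof.
elim: k => [|k IH]; first by rewrite big_ord0 min0n.
by rewrite big_ord_recr /= IH; case: (ltnP k n) => h; lia.
Qed.

Lemma card_ord_lt {k} (n : 'I_k.+1) : #|[set p : 'I_k | (p < n)%N]| = n.
Proof.
by rewrite card_predE sum_ord_lt; apply/minn_idPr; rewrite -ltnS.
Qed.

Lemma sum_ord_eq (n x : nat) : (\sum_(t < n) (x == t : nat))%N = (x < n)%N.
Proof.
elim: n => [|n IH]; first by rewrite big_ord0.
rewrite big_ord_recr /= IH ltnS leq_eqVlt.
by case: (ltngtP x n) => h; rewrite ?(eqP h) ?eqxx //=; lia.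
Qed.

Lemma sum_eq_pointwise (I : finType) (a b : I -> nat) i :
  (forall x, a x <= b x)%N -> (\sum_x a x = \sum_x b x)%N -> a i = b i.
Proof.
move=> le sumeq.
rewrite (bigD1 i) //= [X in _ = X](bigD1 i) //= in sumeq.
have : (\sum_(x | x != i) a x <= \sum_(x | x != i) b x)%N.
  by apply: leq_sum => x _; exact: le.
by move: (le i) sumeq; lia.
Qed.

Lemma leq_sum_subset (T : finType) (A B : {set T}) (F : T -> nat) :
  A \subset B -> (\sum_(x in A) F x <= \sum_(x in B) F x)%N.
Proof.
move=> sub; rewrite [X in (_ <= X)%N](big_setID A) /= (finset.setIidPr sub).
exact: leq_addr.
Qed.

Lemma card_le_split (T : finType) (P : pred T) (g : T -> nat) n :
  #|[set x | P x && (g x <= n)%N]| =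
  (\sum_(t < n.+1) #|[set x | P x && (g x == t)]|)%N.
Proof.
rewrite card_predE; under [RHS]eq_bigr do rewrite card_predE.
rewrite exchange_big /=; apply: eq_bigr => x _.
by case: (P x) => /=; [rewrite sum_ord_eq ltnS | rewrite big1].
Qed.

Section Profiles.

Variables (K : multigraph) (k : nat).
Local Notation m := (ke K).

Definition composition := {ffun 'I_m -> 'I_k.+1}.

Definition admissible (s : 'I_m -> nat) : bool :=
  [forall i, is_loop K i ==> (2 <= s i)%N] &&
  [forall i, forall i', ((i != i') && parallel K i i') ==>
                        ((0 < s i) || (0 < s i'))%N].

Definition valid_comp (s : composition) : bool :=
  ((\sum_i (s i : nat))%N == k) && admissible (fun i => s i).

Lemma snum_le (f : subdiv K k) i : (snum K k f i <= k)%N.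
Proof. by rewrite /snum; apply: leq_trans (max_card _) _; rewrite card_ord. Qed.

Definition profile (f : subdiv K k) : composition :=
  [ffun i => inord (snum K k f i)].

Lemma profileE f i : (profile f i : nat) = snum K k f i.
Proof. by rewrite ffunE inordK // ltnS snum_le. Qed.

(* Every extra vertex lies on exactly one edge. *)
Lemma sum_snum f : (\sum_i snum K k f i)%N = k.
Proof.
under eq_bigr do rewrite /snum card_predE.
rewrite exchange_big /= -[RHS](card_ord k) -sum1_card; apply: eq_bigr => v _.
rewrite (bigD1 (f v).1) //= eqxx big1 // => j /negbTE.
by rewrite eq_sym => ->.
Qed.

Lemma valid_profile f : valid_subdiv K k f -> valid_comp (profile f).
Proof.
case/and4P=> _ _ hl hp; apply/andP; split.
  by under eq_bigr do rewrite profileE; rewrite sum_snum.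
apply/andP; split; apply/forallP => i.
  by rewrite profileE; exact: (forallP hl i).
by apply/forallP => i'; rewrite !profileE; exact: (forallP (forallP hp i) i').
Qed.

Definition slots (s : composition) : pred ('I_m * 'I_k) :=
  fun x => (x.2 < s x.1)%N.

Lemma card_slots s : valid_comp s -> #|slots s| = k.
Proof.
case/andP => /eqP hs _.
rewrite -sum1_card big_mkcond /=.
rewrite -(pair_big predT predT
  (fun i (p : 'I_k) => if (p < s i)%N then 1 else 0)%N) /=.
rewrite -[RHS]hs; apply: eq_bigr => i _.
rewrite -[in RHS](card_ord_lt (s i)) card_predE.
by apply: eq_bigr => p _; case: ltnP.
Qed.

Lemma snum_le_slots (s : composition) (f : subdiv K k) i :
  f \in ffun_on (slots s) -> injectiveb f -> (snum K k f i <= s i)%N.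
Proof.
move=> /ffun_onP hon inj; rewrite /snum -card_ord_lt.
rewrite -(card_in_imset (f := fun v => (f v).2)).
  apply/subset_leq_card/fintype.subsetP => p /imsetP [v].
  by rewrite !inE => /eqP hv ->; have := hon v; rewrite /slots /in_mem /= hv.
move=> v w; rewrite !inE => /eqP hv /eqP hw h.
apply: (injectiveP _ inj).
by case: (f v) hv h => a b; case: (f w) hw => c d /= -> -> ->.
Qed.

Lemma fiber_eq s : valid_comp s ->
  [set f : subdiv K k | valid_subdiv K k f && (profile f == s)] =
  [set f : subdiv K k in ffun_on (slots s) | injectiveb f].
Proof.
move=> vs; apply/setP => f; rewrite !inE; apply/idP/idP.
  case/andP => /and4P [inj hpos _ _] /eqP <-.
  rewrite inj andbT; apply/ffun_onP => v.
  by rewrite /slots /in_mem /= profileE; exact: (forallP hpos v).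
case/andP => hon inj; case/andP: (vs) => /eqP hs /andP [hl hp].
have snumE i : snum K k f i = s i.
  apply: (@sum_eq_pointwise _ _ (fun i => (s i : nat))) => [x|].
    exact: snum_le_slots.
  by rewrite sum_snum hs.
have -> : profile f == s.
  by apply/eqP/ffunP => i; apply: val_inj; rewrite /= profileE snumE.
rewrite andbT; apply/and4P; split => //.
- by apply/forallP => v; rewrite snumE; exact: (ffun_onP hon).
- by apply/forallP => i; rewrite snumE; exact: (forallP hl i).
- apply/forallP => i; apply/forallP => i'; rewrite !snumE.
  exact: (forallP (forallP hp i) i').
Qed.

Lemma card_fiber s :
  #|[set f : subdiv K k | valid_subdiv K k f && (profile f == s)]| =
  (valid_comp s * k`!)%N.
Proof.
case vs: (valid_comp s).
  by rewrite fiber_eq // card_inj_ffuns_on card_slots // card_ord ffactnn mul1n.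
rewrite mul0n; apply/eqP; rewrite cards_eq0; apply/eqP/setP => f.
rewrite !inE; apply/negbTE/negP => /andP [v /eqP fs].
by move: (valid_profile f v); rewrite fs vs.
Qed.

Lemma core_count (e : 'I_m) (P : pred nat) :
  #|[set f : subdiv K k | valid_subdiv K k f && P (snum K k f e)]| =
  (k`! * #|[set s : composition | valid_comp s && P (s e)]|)%N.
Proof.
rewrite !card_predE (partition_big profile predT) //= big_distrr /=.
apply: eq_bigr => s _.
transitivity
  (P (s e) * #|[set f | valid_subdiv K k f && (profile f == s)]|)%N.
  rewrite card_predE big_distrr /= big_mkcond /=; apply: eq_bigr => f _.
  case: eqP => [<-|]; last by case: valid_subdiv; rewrite ?andbF muln0.
  by rewrite profileE; case: valid_subdiv; case: (P _).
by rewrite card_fiber; case: valid_comp; case: (P _);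
  rewrite /= ?mul1n ?mul0n ?muln0 ?muln1.
Qed.

End Profiles.

Arguments valid_comp {K k} s.

Lemma admissible_mono (K : multigraph) (a b : 'I_(ke K) -> nat) :
  (forall x, (a x <= b x)%N \/ (2 <= b x)%N) ->
  admissible K a -> admissible K b.
Proof.
move=> ab /andP [hl hp].
have up2 x : (2 <= a x)%N -> (2 <= b x)%N by case: (ab x); lia.
have up0 x : (0 < a x)%N -> (0 < b x)%N by case: (ab x); lia.
apply/andP; split; apply/forallP => i.
  by apply/implyP => li; apply/up2/(implyP (forallP hl i) li).
apply/forallP => i'; apply/implyP => c.
have /orP [/up0 -> // | /up0 ->] := implyP (forallP (forallP hp i) i') c.
by rewrite orbT.
Qed.

Section Switching.

Variables (K : multigraph) (k : nat) (e : 'I_(ke K)).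
Local Notation m := (ke K).
Local Notation comp := (composition K k).

Definition level (t : nat) : {set comp} :=
  [set s : comp | valid_comp s && ((s e : nat) == t)].

Definition shift (i : 'I_m) (s : comp) : comp :=
  [ffun x => if x == i then inord (s x).-1
             else if x == e then inord (s x).+1 else s x].

Lemma shiftE {i} (s : comp) x : i != e -> (s e < k)%N ->
  (shift i s x : nat) =
  if x == i then (s x).-1 else if x == e then (s x).+1 else s x.
Proof.
move=> ie lt; rewrite ffunE; case: eqP => [->|_].
  by rewrite inordK // ltnS; apply: leq_trans (leq_pred _) _; rewrite -ltnS.
by case: eqP => [->|_] //; rewrite inordK.
Qed.

(* If some other edge is nonempty, then s_e < k, so the shift is defined. *)
Lemma level_lt_k {t i} {s : comp} : i != e -> s \in level t -> (0 < s i)%N ->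
  (s e < k)%N.
Proof.
move=> ie; rewrite inE => /andP [/andP [/eqP hs _] _] pos.
have : ((s i : nat) + s e <= \sum_x (s x : nat))%N.
  by rewrite (bigD1 i) //= (bigD1 e) /= 1?eq_sym //; lia.
by rewrite hs; lia.
Qed.

Lemma shift_level {t i} {s : comp} : i != e -> s \in level t -> (3 <= s i)%N ->
  shift i s \in level t.+1 /\ (shift i s i : nat) = (s i).-1.
Proof.
move=> ie st h3; have lt := level_lt_k ie st (ltnW (ltnW h3)).
have sE x := shiftE s x ie lt.
move: st; rewrite !inE => /andP [/andP [/eqP hs adm] /eqP het].
split; last by rewrite sE eqxx.
have ei : (e == i) = false by rewrite eq_sym; exact: negbTE.
rewrite sE ei eqxx het eqxx andbT; apply/andP; split.
  have one (y : 'I_m) : (\sum_x ((x == y) : nat))%N = 1%N.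
    by rewrite (bigD1 y) //= eqxx big1 // => z /negbTE ->.
  have : (\sum_x ((shift i s x : nat) + (x == i)) =
          \sum_x ((s x : nat) + (x == e)))%N.
    apply: eq_bigr => x _; rewrite sE; case: eqP => [->|_].
      by rewrite (negbTE ie); lia.
    by case: eqP => [->|_] /=; lia.
  by rewrite !big_split /= !one => /addIn ->; rewrite hs.
apply: (@admissible_mono K (fun x => (s x : nat))) adm => x.
rewrite sE; case: eqP => [->|_]; first by right; lia.
by case: eqP => _; left; lia.
Qed.

Lemma shift_inj {t i} : i != e ->
  {in [set s in level t | (3 <= s i)%N] &, injective (shift i)}.
Proof.
move=> ie s1 s2 /setIdP [c1 h1] /setIdP [c2 h2] h.
have pos1 : (0 < s1 i)%N := ltnW (ltnW h1).
have pos2 : (0 < s2 i)%N := ltnW (ltnW h2).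
have l1 := level_lt_k ie c1 pos1; have l2 := level_lt_k ie c2 pos2.
apply/ffunP => x; apply: val_inj => /=.
have := congr1 (fun s : comp => (s x : nat)) h => /=.
rewrite (shiftE s1 x ie l1) (shiftE s2 x ie l2).
case: eqP => [->|_]; last by case: eqP => _ // [].
by move/(congr1 S); rewrite !prednK.
Qed.

(* Double counting along the switching, for a fixed edge i != e: each
   s in level t with s_i >= 3 offers s_i - 2 switchings, and each image
   s' = shift i s is hit once and has s'_i - 1 = s_i - 2. *)
Lemma switch_count t i : i != e ->
  (\sum_(s in level t) ((s i : nat) - 2) <=
   \sum_(s in level t.+1) ((s i : nat) - 1))%N.
Proof.
move=> ie; rewrite (bigID (fun s : comp => (3 <= s i)%N)) /=.
rewrite [X in (_ + X)%N]big1 ?addn0; last first.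
  by move=> s /andP [_]; rewrite -ltnNge; lia.
set D := [set s in level t | (3 <= s i)%N].
have -> : (\sum_(s in level t | (3 <= s i)%N) ((s i : nat) - 2) =
           \sum_(s in D) ((shift i s i : nat) - 1))%N.
  apply: eq_big => [s|s /andP [c h]]; first by rewrite /D !inE.
  by rewrite (proj2 (shift_level ie c h)) -subn1 -subnDA.
rewrite -(big_imset (fun s' : comp => (s' i : nat) - 1)%N (shift_inj ie)).
apply: leq_sum_subset; apply/fintype.subsetP => s' /imsetP [s].
by move=> /setIdP [c h] ->; exact: (proj1 (shift_level ie c h)).
Qed.

Lemma excess_lower (s : comp) t : s \in level t ->
  (k - t - 2 * m <= \sum_(i | i != e) ((s i : nat) - 2))%N.
Proof.
rewrite inE => /andP [/andP [/eqP hs _] /eqP het].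
have split_e : (\sum_i (s i : nat) = s e + \sum_(i | i != e) (s i : nat))%N.
  by rewrite (bigD1 e).
have : (\sum_(i | i != e) (s i : nat) <=
        \sum_(i | i != e) ((s i : nat) - 2) + 2 * m)%N.
  apply: (@leq_trans (\sum_(i | i != e) (((s i : nat) - 2) + 2))%N).
    by apply: leq_sum => i _; rewrite addnC -leq_subLR.
  rewrite big_split /= leq_add2l.
  apply: (@leq_trans (\sum_(i < m) 2)%N).
    by rewrite [X in (_ <= X)%N](bigD1 e) //=; exact: leq_addl.
  by rewrite sum_nat_const card_ord mulnC.
by move: split_e; rewrite hs het; lia.
Qed.

Lemma level_switching t : ((k - t - 2 * m) * #|level t| <= k * #|level t.+1|)%N.
Proof.
rewrite mulnC -sum_nat_const.
apply: (@leq_trans (\sum_(s in level t) \sum_(i | i != e) ((s i : nat) - 2)))%N.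
  by apply: leq_sum => s; exact: excess_lower.
rewrite exchange_big /=.
apply: (@leq_trans
  (\sum_(i | i != e) \sum_(s in level t.+1) ((s i : nat) - 1)))%N.
  by apply: leq_sum => i; exact: switch_count.
rewrite exchange_big /= mulnC -sum_nat_const.
apply: leq_sum => s; rewrite inE => /andP [/andP [/eqP hs _] _].
rewrite -[X in (_ <= X)%N]hs.
apply: (@leq_trans (\sum_(i | i != e) (s i : nat)))%N.
  by apply: leq_sum => i _; exact: leq_subr.
by rewrite [X in (_ <= X)%N](bigD1 e) //=; exact: leq_addl.
Qed.

End Switching.

Lemma expn_sub_bernoulli (k c d : nat) : (c <= k)%N ->
  (k ^ d.+1 <= k * (k - c) ^ d + d * c * k ^ d)%N.
Proof.
move=> ck; elim: d => [|d IH]; first by rewrite !expn0 expn1 !muln1 mul0n addn0.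
have aP : ((k - c) ^ d <= k ^ d)%N.
  by case: (posnP d) => [->|d0]; rewrite ?expn0 ?leq_exp2r ?leq_subr.
set a := ((k - c) ^ d)%N in aP IH *; set P := (k ^ d)%N in aP IH *.
rewrite [(k ^ d.+2)%N]expnS [((k - c) ^ d.+1)%N]expnS expnS.
rewrite expnS in IH.
have h1 := leq_mul (leqnn k) IH.
have h2 := leq_mul (leqnn (k * c)) aP.
have e1 : k = ((k - c) + c)%N by rewrite subnK.
nia.
Qed.

Lemma expn_sub_half (k c d : nat) : (0 < k)%N -> (2 * d * c <= k)%N ->
  (k ^ d <= 2 * (k - c) ^ d)%N.
Proof.
move=> k0; case: d => [|d] h; first by rewrite !expn0.
have ck : (c <= k)%N by apply: leq_trans h; nia.
have B := @expn_sub_bernoulli k c d.+1 ck.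
have h3 := leq_mul h (leqnn (k ^ d.+1)).
rewrite expnS in B.
set a := ((k - c) ^ d.+1)%N in B *; set P := (k ^ d.+1)%N in B h3 *.
by rewrite -(leq_pmul2l k0); nia.
Qed.

Lemma level_chain (N : nat -> nat) (k c T : nat) :
  (0 < k)%N -> (2 * T * c <= k)%N ->
  (forall t, (t < T)%N -> ((k - c) * N t <= k * N t.+1)%N) ->
  forall t d, (t + d <= T)%N -> (N t <= 2 * N (t + d))%N.
Proof.
move=> k0 hk hs t d td.
have iter d' : (t + d' <= T)%N ->
    ((k - c) ^ d' * N t <= k ^ d' * N (t + d'))%N.
  elim: d' => [|d' IH] h; first by rewrite !expn0 addn0.
  rewrite !expnS -!mulnA.
  apply: (@leq_trans ((k - c) * (k ^ d' * N (t + d'))))%N.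
    by rewrite leq_mul2l IH ?orbT // ltnW // -addnS.
  rewrite mulnCA [X in (_ <= X)%N]mulnCA leq_mul2l addnS hs ?orbT //.
  by rewrite -addnS.
have dc : (2 * d * c <= k)%N.
  apply: leq_trans hk; rewrite leq_mul2r leq_mul2l /=.
  by rewrite (leq_trans (leq_addl t d) td) orbT.
have half := @expn_sub_half k c d k0 dc.
have kd : (0 < k ^ d)%N by rewrite expn_gt0 k0.
rewrite -(leq_pmul2l kd).
apply: (@leq_trans (2 * (k - c) ^ d * N t))%N.
  by rewrite leq_mul2r half orbT.
by have := iter d td; nia.
Qed.

Lemma head_mass (N : nat -> nat) j T Bad Tot : (j < T)%N ->
  (forall t t', (t <= j)%N -> (j < t')%N -> (t' <= T)%N ->
     (N t <= 2 * N t')%N) ->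
  Bad = (\sum_(t < j.+1) N t)%N -> (\sum_(t < T.+1) N t <= Tot)%N ->
  ((T - j) * Bad <= 2 * j.+1 * Tot)%N.
Proof.
move=> jT hN -> hT.
have tail : (\sum_(j.+1 <= t' < T.+1) N t' <= Tot)%N.
  apply: leq_trans hT.
  rewrite -(big_mkord predT N) (@big_cat_nat _ _ _ j.+1 0 T.+1) //=.
    exact: leq_addl.
  by rewrite ltnS ltnW.
have one t : (t <= j)%N -> ((T - j) * N t <= 2 * Tot)%N.
  move=> tj; rewrite -subSS -sum_nat_const_nat.
  apply: (@leq_trans (\sum_(j.+1 <= t' < T.+1) 2 * N t'))%N.
    rewrite big_nat_cond [X in (_ <= X)%N]big_nat_cond.
    apply: leq_sum => tt /andP [/andP [h1 h2] _].
    by apply: hN => //; rewrite -ltnS.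
  by rewrite -big_distrr /= leq_mul2l tail.
rewrite big_distrr /=.
apply: (@leq_trans (\sum_(t < j.+1) 2 * Tot))%N.
  by apply: leq_sum => t _; apply: one; rewrite -ltnS.
by rewrite sum_nat_const card_ord mulnA [(j.+1 * 2)%N]mulnC.
Qed.

Lemma core_bound (K : multigraph) (k : nat) (e : 'I_(ke K)) (j L : nat) :
  (0 < L)%N -> (0 < k)%N -> (2 * (j + L) * ((j + L) + 2 * ke K) <= k)%N ->
  (L * #|[set f : subdiv K k | valid_subdiv K k f && (snum K k f e <= j)%N]|
   <= 2 * j.+1 * #|[set f : subdiv K k | valid_subdiv K k f]|)%N.
Proof.
move=> L0 k0 hk.
pose N t := #|[set f : subdiv K k | valid_subdiv K k f && (snum K k f e == t)]|.
have NE t : N t = (k`! * #|level K k e t|)%N.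
  by rewrite /N (core_count K k e (fun x => x == t)).
have grow t : (t < j + L)%N ->
    ((k - (j + L + 2 * ke K)) * N t <= k * N t.+1)%N.
  move=> tT; rewrite !NE mulnCA [X in (_ <= X)%N]mulnCA leq_mul2l.
  apply/orP; right; apply: leq_trans (level_switching K k e t).
  by rewrite leq_mul2r; apply/orP; right; lia.
have chain := @level_chain N k _ _ k0 hk grow.
rewrite -[X in (X * _)%N](addKn j L).
apply: (@head_mass N) => [| t t' tj jt t'T | |]; first by lia.
- by rewrite -(subnKC (ltnW (leq_ltn_trans tj jt))); apply: chain; lia.
- by rewrite card_le_split.
- rewrite -card_le_split; apply/subset_leq_card/fintype.subsetP => f.
  by rewrite !inE => /andP [].
Qed.

Import numFieldNormedType.Exports.
Local Open Scope classical_set_scope.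
Local Open Scope ring_scope.

Lemma core_prob_le (R : realType) (K : multigraph) (k : nat) (e : 'I_(ke K))
    (j L : nat) : (0 < L)%N -> (ke K * (8 * (j + L) * (j + L)) <= k)%N ->
  core_prob R K k e j <= (2 * j.+1)%:R / L%:R.
Proof.
move=> L0 hk.
have m0 : (0 < ke K)%N by case: e => i /=; lia.
have k0 : (0 < k)%N by nia.
have hk2 : (2 * (j + L) * ((j + L) + 2 * ke K) <= k)%N by nia.
have := @core_bound K k e j L L0 k0 hk2; rewrite /core_prob.
set Bad := #|_|; set Tot := #|_| => cb.
have [->|Tot0] := eqVneq Tot 0%N; first by rewrite invr0 mulr0 divr_ge0.
rewrite ler_pdivrMr ?ltr0n ?lt0n // mulrAC ler_pdivlMr ?ltr0n //.
by rewrite mulrC -!natrM ler_nat.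
Qed.

Theorem mainTheorem14 (R : realType) (K : nat -> multigraph) (k : nat -> nat)
    (e : forall n, 'I_(ke (K n))) :
  (forall n, is_kernel (K n)) ->
  (forall eps : R, 0 < eps ->
     \forall n \near \oo, ((ke (K n))%:R <= eps * (k n)%:R)) ->
  forall j : nat, (fun n => core_prob R (K n) (k n) (e n) j) @ \oo --> (0 : R).
Proof.
move=> _ sparse j; apply/cvgrPdist_le => eps eps0.
pose L := (Num.Def.archi_bound ((2 * j.+1)%:R / eps : R)).+1.
have L0 : (0 < L)%N by [].
have hL : (2 * j.+1)%:R / L%:R <= eps.
  have h0 : (0 : R) <= (2 * j.+1)%:R / eps by rewrite divr_ge0 // ltW.
  rewrite ler_pdivrMr ?ltr0n // -ler_pdivrMl // mulrC.
  by apply: (le_trans (ltW (archi_boundP h0))); rewrite ler_nat leqnSn.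
pose c := (8 * (j + L) * (j + L))%N.
have c0 : (0 < c)%N by rewrite !muln_gt0 addn_gt0 L0 orbT.
have inv_c0 : (0 : R) < c%:R^-1 by rewrite invr_gt0 ltr0n.
apply: filterS (sparse _ inv_c0) => n hn.
have hk : (ke (K n) * c <= k n)%N.
  by rewrite -(ler_nat R) natrM -ler_pdivlMr ?ltr0n // mulrC.
rewrite sub0r normrN ger0_norm; last by rewrite divr_ge0.
exact: le_trans (@core_prob_le R (K n) (k n) (e n) j L L0 hk) hL.
Qed.
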